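(* Fix $\epsilon>0$. There is a constant $C$, depending only on $p$ and $\epsilon$, such that for every $\lambda\neq0$ with $|\arg\lambda|\le\pi-\epsilon$ and all real numbers $\mu_i,\mu_j$, $$\Big|\frac{\mu_i-\mu_j}{h_\lambda(\mu_i)-h_\lambda(\mu_j)}\Big|\le C\,\Lambda_{ij},\qquad \Lambda_{ij}=\max\big\{1,\ |\lambda|^{\frac1{2p}}|\mu_i|^{1-\frac1p},\ |\lambda|^{\frac1{2p}}|\mu_j|^{1-\frac1p}\big\}.$$ When $\mu_i=\mu_j$ the quotient is read as $1/h_\lambda'(\mu_i)$. Equivalently, for every Hermitian $K$ with eigenvalues $\mu_1,\dots,\mu_N$, the $(i,j)$ eigenvalue of the operator $(1\otimes1+\Sigma_\lambda(K))^{-1}$ is bounded in modulus by $C\Lambda_{ij}$.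
   Context: Fix an integer $p\ge2$. Let $T_p(z)$ be the Fuss–Catalan function: the unique solution of $zT^p-T+1=0$ analytic on $\mathbb C\setminus[(p-1)^{p-1}/p^p,\infty)$ with $T_p(0)=1$. Square roots are principal branches. For $\lambda\in\mathbb C$ set $f_\lambda(u)=\sqrt{T_p(-\lambda u^{2p-2})}$ and $h_\lambda(u)=uf_\lambda(u)$. Its inverse is $k_\lambda(v)=v\sqrt{1+\lambda v^{2p-2}}$. For an $N\times N$ Hermitian matrix $K$ with orthonormal eigenbasis $e_1,\dots,e_N$ and eigenvalues $\mu_1,\dots,\mu_N$, the operator $(1\otimes1+\Sigma_\lambda(K))^{-1}=\frac{K\otimes1-1\otimes K}{h_\lambda(K)\otimes1-1\otimes h_\lambda(K)}$ on $\mathbb C^N\otimes\mathbb C^N$ is diagonal in the basis $e_i\otimes e_j$. Its eigenvalue on $e_i\otimes e_j$ is $\frac{\mu_i-\mu_j}{h_\lambda(\mu_i)-h_\lambda(\mu_j)}$, read as $1/h'_\lambda(\mu_i)$ if $\mu_i=\mu_j$. *)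

From Stdlib Require Import Reals Lra Lia.
Open Scope R_scope.

Definition Cx := (R * R)%type.
Definition Cre (z : Cx) : R := fst z.
Definition Cim (z : Cx) : R := snd z.
Definition CofR (a : R) : Cx := (a, 0).
Definition Cadd (z w : Cx) : Cx := (fst z + fst w, snd z + snd w).
Definition Copp (z : Cx) : Cx := (- fst z, - snd z).
Definition Csub (z w : Cx) : Cx := Cadd z (Copp w).
Definition Cmul (z w : Cx) : Cx :=
  (fst z * fst w - snd z * snd w, fst z * snd w + snd z * fst w).
Definition Cnorm (z : Cx) : R := sqrt (fst z ^ 2 + snd z ^ 2).
(** Inverse (total; 0 maps to 0). *)
Definition Cinv (z : Cx) : Cx :=
  (fst z / (fst z ^ 2 + snd z ^ 2), - snd z / (fst z ^ 2 + snd z ^ 2)).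
Definition Cdiv (z w : Cx) : Cx := Cmul z (Cinv w).
Fixpoint Cpow (z : Cx) (n : nat) : Cx :=
  match n with O => (1, 0) | S m => Cmul z (Cpow z m) end.

(** Principal square root: the root w of z with Re w > 0, or Re w = 0 and Im w >= 0. *)
Definition Csqrt (z : Cx) : Cx :=
  (sqrt ((Cnorm z + fst z) / 2),
   (if Rlt_dec (snd z) 0 then -1 else 1) * sqrt ((Cnorm z - fst z) / 2)).

Definition arg_bound (lam : Cx) (eps : R) : Prop :=
  exists theta : R, - PI < theta <= PI /\ Rabs theta <= PI - eps /\
    lam = (Cnorm lam * cos theta, Cnorm lam * sin theta).

Definition branch_pt (p : nat) : R := INR (p - 1) ^ (p - 1) / INR p ^ p.
Definition slit_dom (p : nat) (z : Cx) : Prop :=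
  ~ (snd z = 0 /\ branch_pt p <= fst z).

(** T is the Fuss–Catalan function T_p on the slit domain: the solution of
    z T^p - T + 1 = 0 on the slit domain with T(0) = 1 that is continuous there
    (equivalently analytic there: the roots are simple on the slit domain, so the
    continuous branch is unique and analytic by the implicit function theorem). *)
Definition is_fuss_catalan (p : nat) (T : Cx -> Cx) : Prop :=
  T (0, 0) = (1, 0) /\
  (forall z, slit_dom p z ->
     Cadd (Csub (Cmul z (Cpow (T z) p)) (T z)) (1, 0) = (0, 0)) /\
  (forall z, slit_dom p z -> forall e, e > 0 -> exists d, d > 0 /\
     forall w, slit_dom p w -> Cnorm (Csub w z) < d -> Cnorm (Csub (T w) (T z)) < e).

Definition f_lam (p : nat) (T : Cx -> Cx) (lam : Cx) (u : R) : Cx :=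
  Csqrt (T (Cmul (Copp lam) (CofR (u ^ (2 * p - 2))))).
Definition h_lam (p : nat) (T : Cx -> Cx) (lam : Cx) (u : R) : Cx :=
  Cmul (CofR u) (f_lam p T lam u).

Definition has_cderiv (g : R -> Cx) (x : R) (d : Cx) : Prop :=
  derivable_pt_lim (fun t => fst (g t)) x (fst d) /\
  derivable_pt_lim (fun t => snd (g t)) x (snd d).

(** x^y for x >= 0 and y > 0, with 0^y = 0 (Stdlib's Rpower 0 y is 1). *)
Definition rpow (x y : R) : R := if Req_EM_T x 0 then 0 else Rpower x y.

Definition Lambda (p : nat) (lam : Cx) (mi mj : R) : R :=
  Rmax 1 (Rmax (rpow (Cnorm lam) (/ (2 * INR p)) * rpow (Rabs mi) (1 - / INR p))
               (rpow (Cnorm lam) (/ (2 * INR p)) * rpow (Rabs mj) (1 - / INR p))).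

(* Write [t = T z] with [z = -lam u^(2p-2)] and [f = sqrt t]. For [Im z < 0], [t] stays in
   the sector [-PI/p <= arg t <= 0]: the root equation forbids the boundary of the sector,
   [T 0 = 1] lies inside it, and [T] is continuous along the ray from [0] to [z]; conjugation
   handles [Im z > 0]. Then [t (1 + lam u^(2p-2) t^(p-1)) = 1] where the second summand has
   argument at distance at least [alpha = min(PI/p, eps, PI/2)] from [PI], so
   [|t| <= 1 / sin alpha], and [Re t >= 0].
   With [g = 1/f] and [w = h(u) = u f] one has [lam w^(2p-2) = g^2 - 1], hence
   [(g1 - g2)(g1 + g2) = lam (w1^(2p-2) - w2^(2p-2))]; since [u = w g], this bounds
   [|u1 - u2|] by [|w1 - w2| (C1 + C2 max |g_i|)]. Finally [|g| <= 2 max(1, Lambda)] because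
   either [|t| >= 1/2] or [|lam| |u|^(2p-2) |t|^p = |t - 1| >= 1/2]. The diagonal case follows
   by letting [u2 -> u1], [1/|f|] being locally bounded by continuity of [T]. *)

From Pilot Require Import Defs.
From Stdlib Require Import Reals Lra Lia Psatz.
From Coquelicot Require Import Coquelicot.
(* Coquelicot shadows [Cinv], [Cpow], ...; re-import the statement's definitions. *)
Import Defs.
Open Scope R_scope.

Lemma Cpow_Defs (z : Cx) n : Defs.Cpow z n = (z ^ n)%C.
Proof. induction n as [|n IH]; simpl; [reflexivity | now rewrite IH]. Qed.

Lemma Rabs_Im_le_Cmod (c : C) : Rabs (Im c) <= Cmod c.
Proof.
  unfold Cmod. rewrite <- sqrt_Rsqr_abs. apply sqrt_le_1_alt.
  destruct c as [x y]. unfold Rsqr, Im; simpl. nra.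
Qed.

Lemma Cmod_le_Rabs_Re_Im (c : C) : Cmod c <= Rabs (Re c) + Rabs (Im c).
Proof.
  pose proof (Rabs_pos (Re c)); pose proof (Rabs_pos (Im c)).
  unfold Cmod. rewrite <- (sqrt_pow2 (Rabs (Re c) + Rabs (Im c))) by lra.
  apply sqrt_le_1_alt. pose proof (pow2_abs (Re c)); pose proof (pow2_abs (Im c)).
  destruct c as [x y]. unfold Re, Im in *; simpl in *. nra.
Qed.

Lemma Im_RtoC_mul (s : R) (z : C) : Im (RtoC s * z)%C = s * Im z.
Proof. destruct z; unfold RtoC, Cmult, Im; simpl; ring. Qed.

Lemma Cmod_RtoC_mul_sub (x s : R) (z : C) :
  Cmod (RtoC x * z - RtoC s * z)%C = Rabs (x - s) * Cmod z.
Proof.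
  replace (RtoC x * z - RtoC s * z)%C with (RtoC (x - s) * z)%C
    by (destruct z; unfold RtoC, Cminus, Cplus, Copp, Cmult; simpl; f_equal; ring).
  now rewrite Cmod_mult, Cmod_R.
Qed.

Lemma pow_lt_compat (x y : R) k : 0 <= x < y -> (1 <= k)%nat -> x ^ k < y ^ k.
Proof.
  intros Hxy Hk. induction k as [|[|k] IH]; [lia | simpl; lra |].
  specialize (IH ltac:(lia)). assert (0 <= x ^ S k) by (apply pow_le; lra).
  simpl in *. nra.
Qed.

Lemma pow_le_reg (x y : R) k : 0 <= x -> 0 <= y -> (1 <= k)%nat -> x ^ k <= y ^ k -> x <= y.
Proof.
  intros Hx Hy Hk H. destruct (Rle_lt_dec x y) as [|Hyx]; [assumption|].
  enough (y ^ k < x ^ k) by lra. apply pow_lt_compat; [lra | assumption].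
Qed.

Definition cis (a : R) : C := (cos a, sin a).

Lemma Cmod_cis a : Cmod (cis a) = 1.
Proof.
  unfold Cmod, cis; simpl. pose proof (sin2_cos2 a). unfold Rsqr in *.
  replace (cos a * (cos a * 1) + sin a * (sin a * 1)) with 1 by lra. apply sqrt_1.
Qed.

Lemma cis_add a b : (cis a * cis b)%C = cis (a + b).
Proof. unfold cis, Cmult; simpl; rewrite cos_plus, sin_plus; f_equal; ring. Qed.

Lemma Cpow_cis a n : (cis a ^ n)%C = cis (INR n * a).
Proof.
  induction n as [|n IH].
  - simpl. unfold cis. now rewrite Rmult_0_l, cos_0, sin_0.
  - rewrite Cpow_S, IH, cis_add, S_INR. f_equal; ring.
Qed.

Lemma Re_polar (r a : R) : Re (RtoC r * cis a)%C = r * cos a.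
Proof. unfold cis, Cmult, RtoC, Re; simpl; ring. Qed.

Lemma Im_polar (r a : R) : Im (RtoC r * cis a)%C = r * sin a.
Proof. unfold cis, Cmult, RtoC, Im; simpl; ring. Qed.

Lemma Cconj_polar (r a : R) : Cconj (RtoC r * cis a)%C = (RtoC r * cis (- a))%C.
Proof. unfold Cconj, RtoC, cis, Cmult; simpl. rewrite cos_neg, sin_neg. f_equal; ring. Qed.

Lemma polar_lower_half_plane (t : C) : t <> 0%C -> Im t <= 0 ->
  exists a, - PI <= a <= 0 /\ t = (RtoC (Cmod t) * cis a)%C.
Proof.
  intros Ht Him. assert (Hm : 0 < Cmod t) by now apply Cmod_gt_0.
  set (x := Re t / Cmod t).
  assert (Hx : -1 <= x <= 1).
  { pose proof (re_le_Cmod t) as Hre. apply Rabs_le_between in Hre.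
    unfold x. split.
    all: apply (Rmult_le_reg_r (Cmod t)); [assumption|].
    all: unfold Rdiv; rewrite Rmult_assoc, Rinv_l; lra. }
  exists (- acos x). pose proof (acos_bound x). split; [lra|].
  unfold cis. rewrite cos_neg, sin_neg, cos_acos, sin_acos by assumption.
  assert (Hs : sqrt (1 - x²) = - Im t / Cmod t).
  { replace (1 - x²) with ((- Im t / Cmod t) ^ 2).
    - apply sqrt_pow2. apply Rdiv_le_0_compat; lra.
    - pose proof (Cmod2_alt t). unfold x, Rsqr.
      apply (Rmult_eq_reg_r (Cmod t ^ 2)); [|apply pow_nonzero; lra].
      field_simplify; lra. }
  rewrite Hs. destruct t as [tr ti]. unfold x, Re, Im in *; simpl in *.
  unfold RtoC, Cmult; simpl. f_equal; field; lra.
Qed.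

Lemma PI_INR_bounds p : (2 <= p)%nat -> 0 < PI / INR p <= PI / 2.
Proof.
  intro Hp. assert (2 <= INR p) by (replace 2 with (INR 2) by (simpl; lra); now apply le_INR).
  pose proof PI_RGT_0. split; [apply Rdiv_lt_0_compat; lra|].
  apply Rmult_le_compat_l; [lra|]. apply Rinv_le_contravar; lra.
Qed.

(* [sector_margin p t >= 0] exactly when [-PI/p <= arg t <= 0]. *)
Definition sector_margin (p : nat) (t : C) : R :=
  Rmin (- Im t) (Im (cis (PI / INR p) * t)%C).

Lemma sector_margin_lipschitz p (a b : C) :
  Rabs (sector_margin p a - sector_margin p b) <= Cmod (a - b)%C.
Proof.
  assert (Hmin : forall x1 y1 x2 y2 e, Rabs (x1 - x2) <= e -> Rabs (y1 - y2) <= e ->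
            Rabs (Rmin x1 y1 - Rmin x2 y2) <= e).
  { intros x1 y1 x2 y2 e. unfold Rmin, Rabs.
    repeat destruct Rle_dec; repeat destruct Rcase_abs; lra. }
  apply Hmin.
  - replace (- Im a - - Im b) with (- Im (a - b)%C) by (destruct a, b; simpl; ring).
    rewrite Rabs_Ropp. apply Rabs_Im_le_Cmod.
  - replace (Im (cis (PI / INR p) * a)%C - Im (cis (PI / INR p) * b)%C)
      with (Im (cis (PI / INR p) * (a - b))%C)
      by (destruct a, b; unfold Cminus, Cplus, Copp, Cmult; simpl; ring).
    eapply Rle_trans; [apply Rabs_Im_le_Cmod|]. rewrite Cmod_mult, Cmod_cis. lra.
Qed.

Lemma sin_lt_0_open x : - PI < x < 0 -> sin x < 0.
Proof. intros. rewrite <- (Ropp_involutive x), sin_neg. pose proof (sin_gt_0 (- x)). lra. Qed.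

Lemma polar_sector p (t : C) : (2 <= p)%nat -> t <> 0%C -> 0 <= sector_margin p t ->
  exists a, - (PI / INR p) <= a <= 0 /\ t = (RtoC (Cmod t) * cis a)%C.
Proof.
  intros Hp Ht Hmar. unfold sector_margin in Hmar.
  pose proof (Rmin_l (- Im t) (Im (cis (PI / INR p) * t)%C)).
  pose proof (Rmin_r (- Im t) (Im (cis (PI / INR p) * t)%C)).
  destruct (polar_lower_half_plane t Ht ltac:(lra)) as [a [Ha Hta]].
  exists a. split; [|assumption]. split; [|lra].
  assert (Hm : 0 < Cmod t) by now apply Cmod_gt_0.
  destruct (Rle_lt_dec (- (PI / INR p)) a) as [|Hlt]; [assumption|]. exfalso.
  assert (Hrot : Im (cis (PI / INR p) * t)%C = Cmod t * sin (PI / INR p + a)).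
  { rewrite Hta at 1. rewrite <- Im_polar, <- cis_add.
    f_equal. ring. }
  pose proof (PI_INR_bounds p Hp).
  assert (sin (PI / INR p + a) < 0) by (apply sin_lt_0_open; lra). nra.
Qed.

Lemma root_nonzero p (z t : C) : (1 <= p)%nat -> (z * t ^ p - t + 1 = 0)%C -> t <> 0%C.
Proof.
  intros Hp Heq ->. replace p with (S (p - 1)) in Heq by lia. rewrite Cpow_S in Heq.
  replace (z * (0 * 0 ^ (p - 1)) - 0 + 1)%C with (RtoC 1) in Heq by ring.
  injection Heq. lra.
Qed.

(* On an edge of the sector [t^p] is real, so the imaginary part of the equation reads
   [Im z * t^p = Im t]: impossible for [t > 0] ([Im t = 0]) and for [arg t = -PI/p]
   ([t^p < 0] and [Im t < 0]). *)
Lemma root_off_sector_boundary p (z t : C) : (2 <= p)%nat -> Im z < 0 ->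
  (z * t ^ p - t + 1 = 0)%C -> sector_margin p t <> 0.
Proof.
  intros Hp Hz Heq Hmar. unfold sector_margin, Rmin in Hmar.
  destruct (Rle_dec (- Im t) (Im (cis (PI / INR p) * t)%C)).
  - destruct t as [x y]. simpl in Hmar. assert (y = 0) by lra. subst y.
    change (x, 0) with (RtoC x) in Heq. rewrite <- RtoC_pow in Heq.
    destruct z as [zr zi]. unfold Cminus, Cplus, Cmult, Copp, RtoC in Heq; simpl in Heq.
    injection Heq as H1 H2. simpl in Hz.
    assert (Hx : x ^ p = 0) by nra.
    assert (x = 0) by (destruct (Req_dec x 0); [assumption|]; now apply (pow_nonzero x p) in Hx).
    subst x. rewrite pow_i in H1 by lia. lra.
  - set (q := Re (cis (PI / INR p) * t)%C).
    assert (Hot : (cis (PI / INR p) * t)%C = RtoC q).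
    { unfold q, RtoC. destruct (cis (PI / INR p) * t)%C as [a b]. simpl in *. now rewrite Hmar. }
    assert (Ht : t = (RtoC q * cis (- (PI / INR p)))%C).
    { rewrite <- Hot.
      replace (cis (PI / INR p) * t * cis (- (PI / INR p)))%C
        with (t * (cis (PI / INR p) * cis (- (PI / INR p))))%C by ring.
      rewrite cis_add, Rplus_opp_r. unfold cis. rewrite cos_0, sin_0.
      change (1, 0) with (RtoC 1). ring. }
    pose proof (PI_INR_bounds p Hp).
    assert (Hs : 0 < sin (PI / INR p)) by (apply sin_gt_0; lra).
    assert (Hq : 0 < q).
    { assert (Him : 0 < - Im t) by lra. rewrite Ht, Im_polar, sin_neg in Him. nra. }
    assert (Htp : (t ^ p)%C = RtoC (- q ^ p)).
    { rewrite Ht, Cpow_mult_l, Cpow_cis, <- RtoC_pow.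
      replace (INR p * - (PI / INR p)) with (- PI) by (field; apply not_0_INR; lia).
      unfold cis. rewrite cos_neg, sin_neg, cos_PI, sin_PI.
      unfold RtoC, Cmult; simpl. f_equal; ring. }
    rewrite Htp, Ht in Heq.
    destruct z as [zr zi]. unfold cis, Cminus, Cplus, Cmult, Copp, RtoC in Heq; simpl in Heq.
    injection Heq as H1 H2. simpl in Hz. rewrite sin_neg in H2.
    assert (0 < q ^ p) by (apply pow_lt; lra). nra.
Qed.

Lemma Cpow_near_1 (t : C) (delta : R) n : Cmod (t - 1)%C <= delta -> delta <= 1 ->
  Cmod (t ^ n - 1)%C <= (2 ^ n - 1) * delta.
Proof.
  intros Ht Hd. induction n as [|n IH].
  - simpl. replace (1 - 1)%C with (RtoC 0) by ring. rewrite Cmod_0. lra.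
  - replace (t ^ S n - 1)%C with (t * (t ^ n - 1) + (t - 1))%C by (rewrite Cpow_S; ring).
    eapply Rle_trans; [apply Cmod_triangle|]. rewrite Cmod_mult.
    assert (Cmod t <= 2).
    { replace t with ((t - 1) + 1)%C at 1 by ring.
      eapply Rle_trans; [apply Cmod_triangle|]. rewrite Cmod_1. lra. }
    pose proof (Cmod_ge_0 (t ^ n - 1)%C). simpl. nra.
Qed.

Lemma Im_mul_neg_near_1 (z w : C) : Cmod z * Cmod (w - 1)%C < - Im z -> Im (z * w)%C < 0.
Proof.
  intro H. replace (z * w)%C with (z + z * (w - 1))%C by ring.
  pose proof (Rabs_Im_le_Cmod (z * (w - 1))%C) as Hzw. rewrite Cmod_mult in Hzw.
  apply Rabs_le_between in Hzw. destruct z, w; simpl in *. lra.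
Qed.

Lemma Im_cis_mul_pos_near_1 (a : R) (t : C) : Cmod (t - 1)%C < sin a -> 0 < Im (cis a * t)%C.
Proof.
  intro H. replace (cis a * t)%C with (cis a + cis a * (t - 1))%C by ring.
  pose proof (Rabs_Im_le_Cmod (cis a * (t - 1))%C) as Hct. rewrite Cmod_mult, Cmod_cis in Hct.
  apply Rabs_le_between in Hct. destruct t; unfold cis in *; simpl in *. lra.
Qed.

Section FussCatalan.
Variables (p : nat) (T : Cx -> Cx).
Hypotheses (Hp : (2 <= p)%nat) (HT : is_fuss_catalan p T).

Lemma fuss_catalan_0 : T (0, 0) = RtoC 1.
Proof. exact (proj1 HT). Qed.

Lemma fuss_catalan_root z : slit_dom p z -> (z * T z ^ p - T z + 1 = 0)%C.
Proof. intro Hz. pose proof (proj1 (proj2 HT) z Hz) as H. now rewrite Cpow_Defs in H. Qed.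

Lemma fuss_catalan_continuous z : slit_dom p z -> forall e, e > 0 -> exists d, d > 0 /\
  forall w, slit_dom p w -> Cmod (w - z)%C < d -> Cmod (T w - T z)%C < e.
Proof. exact (proj2 (proj2 HT) z). Qed.

Lemma slit_dom_Im z : Im z <> 0 -> slit_dom p z.
Proof. intros H [H1 _]. now apply H. Qed.

Lemma slit_dom_Re_nonpos z : Re z <= 0 -> slit_dom p z.
Proof.
  intros H [_ H2]. enough (0 < branch_pt p) by (unfold Re in H; lra).
  apply Rdiv_lt_0_compat; apply pow_lt; apply lt_0_INR; lia.
Qed.

Lemma sector_margin_T_ray_continuous z0 s : Im z0 < 0 -> 0 < s ->
  continuity_pt (fun s => sector_margin p (T (RtoC s * z0)%C)) s.
Proof.
  intros Hz Hs e He.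
  assert (Hslit : forall x, 0 < x -> slit_dom p (RtoC x * z0)%C)
    by (intros x Hx; apply slit_dom_Im; rewrite Im_RtoC_mul; nra).
  assert (Hnz : 0 < Cmod z0) by (apply Cmod_gt_0; intros ->; simpl in Hz; lra).
  destruct (fuss_catalan_continuous _ (Hslit s Hs) e He) as [d [Hd Hw]].
  exists (Rmin s (d / (Cmod z0 + 1))). split.
  { apply Rmin_glb_lt; [assumption|]. apply Rdiv_lt_0_compat; lra. }
  intros x [_ Hx]. simpl in Hx |- *. unfold R_dist in *.
  assert (H1 : Rabs (x - s) < s) by (eapply Rlt_le_trans; [exact Hx | apply Rmin_l]).
  assert (H2 : Rabs (x - s) < d / (Cmod z0 + 1))
    by (eapply Rlt_le_trans; [exact Hx | apply Rmin_r]).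
  apply Rabs_def2 in H1.
  eapply Rle_lt_trans; [apply sector_margin_lipschitz|]. apply Hw; [apply Hslit; lra|].
  rewrite Cmod_RtoC_mul_sub.
  apply (Rmult_lt_compat_r (Cmod z0 + 1)) in H2; [|lra].
  unfold Rdiv in H2. rewrite Rmult_assoc, Rinv_l in H2 by lra.
  pose proof (Rabs_pos (x - s)). nra.
Qed.

Lemma T_ray_near_1 z0 e : Im z0 < 0 -> 0 < e ->
  exists s, 0 < s <= 1 /\ Cmod (T (RtoC s * z0)%C - 1)%C < e.
Proof.
  intros Hz He. assert (Hnz : 0 < Cmod z0) by (apply Cmod_gt_0; intros ->; simpl in Hz; lra).
  destruct (fuss_catalan_continuous (0, 0) ltac:(apply slit_dom_Re_nonpos; simpl; lra) e He)
    as [d [Hd Hw]].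
  set (s := Rmin 1 (d / (2 * Cmod z0))).
  assert (Hs : 0 < s) by (apply Rmin_glb_lt; [lra | apply Rdiv_lt_0_compat; lra]).
  assert (Hsz : s * Cmod z0 < d).
  { assert (s <= d / (2 * Cmod z0)) by apply Rmin_r.
    apply (Rmult_le_compat_r (Cmod z0)) in H; [|lra].
    replace (d / (2 * Cmod z0) * Cmod z0) with (d / 2) in H by (field; lra). lra. }
  exists s. split; [split; [lra | apply Rmin_l]|].
  rewrite <- fuss_catalan_0. apply Hw; [apply slit_dom_Im; rewrite Im_RtoC_mul; nra|].
  replace (RtoC s * z0 - (0, 0))%C with (RtoC s * z0)%C
    by (destruct z0; unfold RtoC, Cmult, Cminus, Cplus, Copp; simpl; f_equal; ring).
  rewrite Cmod_mult, Cmod_R, Rabs_pos_eq; lra.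
Qed.

(* Near [s = 0], [T (s z0)] is close to [T 0 = 1], which is inside the sector. *)
Lemma sector_margin_T_near_0 z0 : Im z0 < 0 ->
  exists s, 0 < s <= 1 /\ 0 < sector_margin p (T (RtoC s * z0)%C).
Proof.
  intros Hz. pose proof (PI_INR_bounds p Hp).
  assert (Hsin : 0 < sin (PI / INR p) <= 1) by (split; [apply sin_gt_0; lra | apply SIN_bound]).
  assert (Hnz : 0 < Cmod z0) by (apply Cmod_gt_0; intros ->; simpl in Hz; lra).
  assert (H2p : 0 < 2 ^ p) by (apply pow_lt; lra).
  set (e0 := Rmin (sin (PI / INR p)) (- Im z0 / (Cmod z0 * 2 ^ p))).
  assert (He0 : 0 < e0).
  { apply Rmin_glb_lt; [lra|]. apply Rdiv_lt_0_compat; [lra|]. now apply Rmult_lt_0_compat. }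
  assert (He0s : e0 <= sin (PI / INR p)) by apply Rmin_l.
  assert (He0z : Cmod z0 * 2 ^ p * e0 <= - Im z0).
  { assert (e0 <= - Im z0 / (Cmod z0 * 2 ^ p)) by apply Rmin_r.
    apply (Rmult_le_compat_l (Cmod z0 * 2 ^ p)) in H0; [|nra].
    replace (Cmod z0 * 2 ^ p * (- Im z0 / (Cmod z0 * 2 ^ p))) with (- Im z0) in H0
      by (field; nra). lra. }
  destruct (T_ray_near_1 z0 e0 Hz He0) as [s [Hs Ht]]. exists s. split; [assumption|].
  set (t := (T (RtoC s * z0)%C : C)) in *.
  assert (Htp := Cpow_near_1 t e0 p (Rlt_le _ _ Ht) ltac:(lra)).
  assert (HIm : Im t = s * Im (z0 * t ^ p)%C).
  { assert (Hsl : slit_dom p (RtoC s * z0)%C) by (apply slit_dom_Im; rewrite Im_RtoC_mul; nra).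
    pose proof (fuss_catalan_root _ Hsl) as Heq. fold t in Heq.
    assert (Ht1 : t = (1 + RtoC s * (z0 * t ^ p))%C).
    { transitivity (t + (RtoC s * z0 * t ^ p - t + 1))%C; [rewrite Heq|]; ring. }
    rewrite Ht1 at 1.
    destruct (z0 * t ^ p)%C; unfold RtoC, Cmult, Cplus, Im; simpl; ring. }
  apply Rmin_glb_lt.
  - rewrite HIm. enough (Im (z0 * t ^ p)%C < 0) by nra.
    apply Im_mul_neg_near_1. pose proof (Cmod_ge_0 (t ^ p - 1)%C). nra.
  - apply Im_cis_mul_pos_near_1. lra.
Qed.

Lemma sector_margin_T_pos z0 : Im z0 < 0 -> 0 < sector_margin p (T z0).
Proof.
  intros Hz. set (g s := sector_margin p (T (RtoC s * z0)%C)).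
  assert (Hne : forall s, 0 < s -> g s <> 0).
  { intros s Hs. apply (root_off_sector_boundary p (RtoC s * z0)%C); [assumption | |].
    - rewrite Im_RtoC_mul; nra.
    - apply fuss_catalan_root, slit_dom_Im. rewrite Im_RtoC_mul; nra. }
  destruct (sector_margin_T_near_0 z0 Hz) as [s1 [Hs1 Hg1]]. fold (g s1) in Hg1.
  replace (T z0) with (T (RtoC 1 * z0)%C) by (f_equal; ring). fold (g 1).
  destruct (Rlt_le_dec 0 (g 1)) as [|Hle]; [assumption|]. exfalso.
  destruct (Req_dec s1 1) as [->|Hs11]; [lra|].
  destruct (Ranalysis5.IVT_interv (fun s => - g s) s1 1) as [c [Hc Hc0]].
  - intros a Ha. apply continuity_pt_opp, sector_margin_T_ray_continuous; lra.
  - lra.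
  - lra.
  - pose proof (Hne 1 Rlt_0_1). lra.
  - apply (Hne c); lra.
Qed.

Lemma sector_margin_T_nonneg z0 : Im z0 <= 0 -> (Im z0 < 0 \/ Re z0 <= 0) ->
  0 <= sector_margin p (T z0).
Proof.
  intros Hz Hor. destruct (Rlt_le_dec (Im z0) 0) as [Hlt|Hge].
  { left. now apply sector_margin_T_pos. }
  assert (Hre : Re z0 <= 0) by (destruct Hor; [lra | assumption]).
  destruct (Rle_lt_dec 0 (sector_margin p (T z0))) as [|Hneg]; [assumption|]. exfalso.
  destruct (fuss_catalan_continuous z0 (slit_dom_Re_nonpos z0 Hre) (- sector_margin p (T z0) / 2))
    as [d [Hd Hw]]; [lra|].
  set (w := (Re z0, - d / 2) : C).
  assert (Hwz : Cmod (w - z0)%C < d).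
  { eapply Rle_lt_trans; [apply Cmod_le_Rabs_Re_Im|].
    replace (Re (w - z0)%C) with 0 by (unfold w; destruct z0; simpl; ring).
    replace (Im (w - z0)%C) with (- (d / 2)) by (unfold w; destruct z0; simpl in *; lra).
    rewrite Rabs_R0, Rabs_Ropp, Rabs_pos_eq; lra. }
  specialize (Hw w (slit_dom_Im w ltac:(simpl; lra)) Hwz).
  pose proof (sector_margin_T_pos w ltac:(simpl; lra)).
  pose proof (sector_margin_lipschitz p (T w) (T z0)) as Hlip. apply Rabs_le_between in Hlip. lra.
Qed.

End FussCatalan.

Lemma slit_dom_conj p (z : C) : slit_dom p z -> slit_dom p (Cconj z).
Proof. unfold slit_dom, Cconj; simpl. intros H [H1 H2]. apply H. split; [lra | assumption]. Qed.

Lemma fuss_catalan_conj p T :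
  is_fuss_catalan p T -> is_fuss_catalan p (fun z => Cconj (T (Cconj z))).
Proof.
  intros HT. assert (Hc1 : Cconj (RtoC 1) = RtoC 1) by (unfold Cconj, RtoC; simpl; f_equal; ring).
  split; [|split].
  - replace (Cconj (0, 0)) with ((0, 0) : C) by (unfold Cconj; simpl; now rewrite Ropp_0).
    now rewrite (fuss_catalan_0 p T HT).
  - intros z Hz. rewrite Cpow_Defs.
    pose proof (fuss_catalan_root p T HT (Cconj z) (slit_dom_conj p z Hz)) as H.
    apply (f_equal Cconj) in H.
    rewrite Cplus_conj, Cminus_conj, Cmult_conj, Cpow_conj, Cconj_conj, Hc1 in H.
    replace (Cconj 0) with (RtoC 0) in H by (unfold Cconj, RtoC; simpl; f_equal; ring).
    exact H.
  - intros z Hz e He.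
    destruct (fuss_catalan_continuous p T HT (Cconj z) (slit_dom_conj p z Hz) e He) as [d [Hd Hw]].
    exists d. split; [assumption|]. intros w Hsw Hwz.
    change (Cmod (Cconj (T (Cconj w)) - Cconj (T (Cconj z)))%C < e).
    rewrite <- Cminus_conj, Cmod_conj. apply Hw; [now apply slit_dom_conj|].
    now rewrite <- Cminus_conj, Cmod_conj.
Qed.

Lemma fuss_catalan_polar_upper p T (R theta : R) : (2 <= p)%nat -> is_fuss_catalan p T ->
  0 <= R -> 0 <= theta < PI ->
  let z := (RtoC (- R) * cis theta)%C in
  slit_dom p z /\ (T z : C) <> 0%C /\
  exists a, - (PI / INR p) <= a <= 0 /\ (T z : C) = (RtoC (Cmod (T z)) * cis a)%C.
Proof.
  intros Hp HT HR Hth z.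
  assert (Hsin : 0 <= sin theta) by (apply sin_ge_0; lra).
  assert (Hor : Im z < 0 \/ Re z <= 0).
  { unfold z. rewrite Im_polar, Re_polar.
    destruct (Rlt_le_dec 0 (R * sin theta)) as [|Hle]; [left; lra | right].
    destruct (Req_dec theta 0) as [->|Hth0]; [rewrite cos_0; lra|].
    assert (0 < sin theta) by (apply sin_gt_0; lra).
    assert (R <= 0) by nra. replace R with 0 by lra. lra. }
  assert (Hsl : slit_dom p z)
    by (destruct Hor; [apply slit_dom_Im, Rlt_not_eq | apply slit_dom_Re_nonpos]; assumption).
  assert (Hne : (T z : C) <> 0%C)
    by (apply (root_nonzero p z); [lia | now apply fuss_catalan_root]).
  split; [assumption|]. split; [assumption|].
  apply (polar_sector p (T z) Hp Hne), sector_margin_T_nonneg; [assumption.. | |assumption].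
  unfold z. rewrite Im_polar. nra.
Qed.

(* The upper half of the slit plane is reduced to the lower half by [T z = conj (T (conj z))]. *)
Lemma fuss_catalan_polar p T (R theta : R) : (2 <= p)%nat -> is_fuss_catalan p T ->
  0 <= R -> - PI < theta < PI ->
  let z := (RtoC (- R) * cis theta)%C in
  slit_dom p z /\ exists rho a, 0 < rho /\ Rabs a <= PI / INR p /\ a * theta <= 0 /\
    T z = (RtoC rho * cis a)%C.
Proof.
  intros Hp HT HR Hth z.
  destruct (Rle_lt_dec 0 theta) as [Hth0|Hth0].
  - destruct (fuss_catalan_polar_upper p T R theta Hp HT HR ltac:(lra)) as [Hsl [Hne [a [Ha Hta]]]].
    split; [assumption|]. exists (Cmod (T z)), a.
    repeat split; [now apply Cmod_gt_0 | apply Rabs_le_between; lra | nra | exact Hta].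
  - destruct (fuss_catalan_polar_upper p _ R (- theta) Hp (fuss_catalan_conj p T HT) HR ltac:(lra))
      as [Hsl [Hne [a [Ha Hta]]]].
    assert (Hz : Cconj (RtoC (- R) * cis (- theta))%C = z)
      by (unfold z; now rewrite Cconj_polar, Ropp_involutive).
    rewrite Hz in Hta, Hne. rewrite Cmod_conj in Hta.
    split; [rewrite <- Hz; now apply slit_dom_conj|].
    exists (Cmod (T z)), (- a). repeat split.
    + rewrite <- Cmod_conj. now apply Cmod_gt_0.
    + apply Rabs_le_between; lra.
    + nra.
    + rewrite <- Cconj_polar, <- Hta. symmetry. apply Cconj_conj.
Qed.

(* For [cos beta < 0] the angle [beta] is within [PI - alpha] of [PI], so the imaginary
   part alone is at least [sin alpha]. *)
Lemma sin_le_Cmod_1_add_polar (alpha beta X : R) : 0 < alpha <= PI / 2 ->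
  Rabs beta <= PI - alpha -> 0 <= X -> sin alpha <= Cmod (1 + RtoC X * cis beta)%C.
Proof.
  intros Ha Hb HX. apply Rabs_le_between in Hb. pose proof PI_RGT_0.
  assert (Hsa : 0 <= sin alpha <= 1) by (split; [apply sin_ge_0; lra | apply SIN_bound]).
  assert (Hsq : sin alpha ^ 2 <= (1 + X * cos beta) ^ 2 + (X * sin beta) ^ 2).
  { pose proof (sin2_cos2 beta) as Hsc. unfold Rsqr in Hsc.
    destruct (Rle_lt_dec 0 (cos beta)) as [Hc|Hc]; [nra|].
    assert (Hsb : sin alpha <= Rabs (sin beta)).
    { destruct (Rle_lt_dec 0 beta) as [Hb0|Hb0].
      - assert (PI / 2 < beta).
        { destruct (Rle_lt_dec beta (PI / 2)); [|assumption].
          assert (0 <= cos beta) by (apply cos_ge_0; lra). lra. }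
        rewrite <- (sin_PI_x beta), Rabs_pos_eq by (apply sin_ge_0; lra).
        apply sin_incr_1; lra.
      - assert (beta < - (PI / 2)).
        { destruct (Rle_lt_dec (- (PI / 2)) beta); [|assumption].
          assert (0 <= cos beta) by (apply cos_ge_0; lra). lra. }
        rewrite <- Rabs_Ropp, <- sin_neg, <- (sin_PI_x (- beta)).
        rewrite Rabs_pos_eq by (apply sin_ge_0; lra). apply sin_incr_1; lra. }
    assert (sin alpha ^ 2 <= sin beta ^ 2)
      by (rewrite <- (pow2_abs (sin beta)); apply pow_incr; lra).
    pose proof (pow2_ge_0 (X + cos beta)). nra. }
  unfold Cmod, cis, RtoC, Cplus, Cmult; simpl.
  rewrite <- (sqrt_pow2 (sin alpha)) by lra. apply sqrt_le_1_alt. simpl in Hsq. nra.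
Qed.

Lemma Cmod_polar (rho a : R) : 0 <= rho -> Cmod (RtoC rho * cis a)%C = rho.
Proof. intro. now rewrite Cmod_mult, Cmod_cis, Cmod_R, Rabs_pos_eq, Rmult_1_r. Qed.

(* The equation reads [t (1 + R rho^(p-1) cis (theta + (p-1) a)) = 1]. *)
Lemma root_modulus_bound p (alpha R rho a theta : R) : (1 <= p)%nat -> 0 < alpha <= PI / 2 ->
  0 <= R -> 0 < rho -> Rabs (theta + INR (p - 1) * a) <= PI - alpha ->
  let t := (RtoC rho * cis a)%C in
  ((RtoC (- R) * cis theta) * t ^ p - t + 1 = 0)%C -> rho * sin alpha <= 1.
Proof.
  intros Hp Ha HR Hr Hb t Heq.
  set (E := (1 + RtoC (R * rho ^ (p - 1)) * cis (theta + INR (p - 1) * a))%C).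
  assert (HE : (t * E = 1)%C).
  { assert (Htp : (t ^ p = t * (RtoC (rho ^ (p - 1)) * cis (INR (p - 1) * a)))%C).
    { replace p with (S (p - 1)) at 1 by lia. unfold t.
      rewrite Cpow_S, Cpow_mult_l, Cpow_cis, RtoC_pow. reflexivity. }
    rewrite Htp in Heq.
    replace (RtoC (- R)) with (- RtoC R)%C in Heq
      by (unfold RtoC, Complex.Copp; simpl; now rewrite Ropp_0).
    match type of Heq with (?L = _)%C => transitivity (1 - L)%C; [|rewrite Heq; ring] end.
    unfold E. rewrite <- cis_add, RtoC_mult. ring. }
  apply (f_equal Cmod) in HE. unfold t in HE. rewrite Cmod_mult, Cmod_1, Cmod_polar in HE by lra.
  assert (sin alpha <= Cmod E).
  { apply sin_le_Cmod_1_add_polar; [assumption.. |]. apply Rmult_le_pos; [assumption|].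
    apply pow_le; lra. }
  nra.
Qed.

Definition fc_arg (p : nat) (lam : C) (u : R) : C := (- lam * RtoC (u ^ (2 * p - 2)))%C.

Definition sector_angle (p : nat) (eps : R) : R := Rmin (PI / INR p) (Rmin eps (PI / 2)).

Lemma sector_angle_bounds p eps : (2 <= p)%nat -> eps > 0 ->
  0 < sector_angle p eps <= PI / 2 /\ sector_angle p eps <= PI / INR p /\
  sector_angle p eps <= eps.
Proof.
  intros Hp He. pose proof (PI_INR_bounds p Hp). pose proof PI_RGT_0. unfold sector_angle.
  pose proof (Rmin_l (PI / INR p) (Rmin eps (PI / 2))).
  pose proof (Rmin_r (PI / INR p) (Rmin eps (PI / 2))).
  pose proof (Rmin_l eps (PI / 2)). pose proof (Rmin_r eps (PI / 2)).
  repeat split; try lra. apply Rmin_glb_lt; [lra | apply Rmin_glb_lt; lra].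
Qed.

Lemma Rabs_add_le_opposite_signs (x y K : R) : Rabs x <= K -> Rabs y <= K -> x * y <= 0 ->
  Rabs (x + y) <= K.
Proof.
  intros Hx Hy Hxy. apply Rabs_le_between in Hx, Hy. apply Rabs_le_between.
  destruct (Rtotal_order x 0) as [|[|]], (Rtotal_order y 0) as [|[|]]; nra.
Qed.

Lemma fuss_catalan_on_ray p T (lam : C) eps u : (2 <= p)%nat -> eps > 0 ->
  is_fuss_catalan p T -> lam <> (0, 0) -> arg_bound lam eps ->
  let t := (T (fc_arg p lam u) : C) in
  slit_dom p (fc_arg p lam u) /\ t <> 0%C /\ 0 <= Re t /\ Cmod t * sin (sector_angle p eps) <= 1.
Proof.
  intros Hp He HT Hlam [theta [Hth [Habs Hpol]]] t.
  destruct (sector_angle_bounds p eps Hp He) as [Ha [Hap Hae]].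
  pose proof (PI_INR_bounds p Hp). pose proof PI_RGT_0.
  set (R := Cnorm lam * u ^ (2 * p - 2)).
  assert (HR : 0 <= R).
  { apply Rmult_le_pos; [apply Cmod_ge_0|].
    replace (2 * p - 2)%nat with (2 * (p - 1))%nat by lia.
    rewrite pow_mult. apply pow_le, pow2_ge_0. }
  assert (Hz : fc_arg p lam u = (RtoC (- R) * cis theta)%C).
  { unfold fc_arg, R. set (N := Cnorm lam) in *. rewrite Hpol.
    unfold RtoC, cis, Cmult, Complex.Copp; simpl. f_equal; ring. }
  apply Rabs_le_between in Habs.
  destruct (fuss_catalan_polar p T R theta Hp HT HR ltac:(lra))
    as [Hsl [rho [a [Hrho [Haa [Hsign Hta]]]]]].
  rewrite <- Hz in Hsl, Hta. fold t in Hta.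
  assert (Hrt : Cmod t = rho) by (rewrite Hta; apply Cmod_polar; lra).
  apply Rabs_le_between in Haa.
  split; [assumption|]. split; [|split].
  - rewrite Hta. intro E. apply (f_equal Cmod) in E. rewrite Cmod_polar, Cmod_0 in E; lra.
  - rewrite Hta, Re_polar. apply Rmult_le_pos; [lra|]. apply cos_ge_0; lra.
  - rewrite Hrt.
    apply (root_modulus_bound p (sector_angle p eps) R rho a theta); [lia | lra | lra | lra | |].
    + assert (Hpa : Rabs (INR (p - 1) * a) <= PI - PI / INR p).
      { rewrite Rabs_mult, Rabs_pos_eq by apply pos_INR.
        replace (PI - PI / INR p) with (INR (p - 1) * (PI / INR p))
          by (rewrite minus_INR by lia; simpl; field; apply not_0_INR; lia).
        apply Rmult_le_compat_l; [apply pos_INR | apply Rabs_le_between; lra]. }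
      apply Rabs_add_le_opposite_signs; [apply Rabs_le_between; lra | lra |].
      pose proof (pos_INR (p - 1)). nra.
    + rewrite <- Hz, <- Hta. now apply fuss_catalan_root.
Qed.

Lemma Cpow_sub_factor (a b : C) (M : R) n : Cmod a <= M -> Cmod b <= M ->
  exists Sm : C, (a ^ n - b ^ n = (a - b) * Sm)%C /\ M * Cmod Sm <= INR n * M ^ n.
Proof.
  intros Ha Hb. assert (HM : 0 <= M) by (pose proof (Cmod_ge_0 a); lra).
  induction n as [|n [Sm [HS HSb]]].
  - exists (RtoC 0). split; [simpl; ring|]. rewrite Cmod_0. simpl. lra.
  - exists (a * Sm + b ^ n)%C. split.
    + rewrite !Cpow_S. transitivity (a * (a ^ n - b ^ n) + (a - b) * b ^ n)%C; [ring|].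
      rewrite HS. ring.
    + pose proof (Cmod_ge_0 a); pose proof (Cmod_ge_0 Sm).
      assert (M * Cmod (a * Sm + b ^ n)%C <= M * (Cmod a * Cmod Sm + Cmod b ^ n)).
      { apply Rmult_le_compat_l; [assumption|].
        rewrite <- Cmod_mult, <- Cmod_pow. apply Cmod_triangle. }
      assert (M * (Cmod a * Cmod Sm) <= M * (INR n * M ^ n)) by (apply Rmult_le_compat_l; nra).
      assert (M * Cmod b ^ n <= M * M ^ n)
        by (apply Rmult_le_compat_l, pow_incr; auto using Cmod_ge_0).
      rewrite S_INR. simpl. lra.
Qed.

Lemma Cmod_le_2_Re_Cinv (f : C) : f <> 0%C -> Cmod f <= 2 * Re f -> Cmod (/ f)%C <= 2 * Re (/ f)%C.
Proof.
  intros Hf H. rewrite Cmod_inv by assumption.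
  assert (Hm : 0 < Cmod f) by now apply Cmod_gt_0.
  replace (Re (/ f)%C) with (Re f / Cmod f ^ 2) by (rewrite Cmod2_alt; destruct f; reflexivity).
  apply (Rmult_le_reg_r (Cmod f ^ 2)); [apply pow_lt; lra|].
  replace (/ Cmod f * Cmod f ^ 2) with (Cmod f) by (field; lra).
  replace (2 * (Re f / Cmod f ^ 2) * Cmod f ^ 2) with (2 * Re f) by (field; lra). lra.
Qed.

Lemma Cmod_Cpow_le_Cmod_sq_add_1 (lam w g : C) n : (lam * w ^ n = g * g - 1)%C ->
  Cmod lam * Cmod w ^ n <= Cmod g ^ 2 + 1.
Proof.
  intro H. rewrite <- Cmod_pow, <- Cmod_mult, H.
  eapply Rle_trans; [apply (Cmod_triangle _ (- (1))%C)|].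
  rewrite Cmod_opp, Cmod_1, Cmod_mult. right. ring.
Qed.

Lemma ratio_bound (X a D A n Mn : R) : 0 < A -> 0 <= a -> 0 <= n -> 0 <= X -> X <= n * Mn ->
  a * Mn <= A ^ 2 + 1 -> A / 2 <= D -> X * a / D <= 2 * n * (A + / A).
Proof.
  intros HA Ha Hn HX HXM HaM HD.
  assert (H1 : X * a <= n * (A ^ 2 + 1)).
  { assert (X * a <= n * Mn * a) by (apply Rmult_le_compat_r; assumption). nra. }
  assert (H2 : / D <= 2 / A).
  { replace (2 / A) with (/ (A / 2)) by (field; lra). apply Rinv_le_contravar; lra. }
  unfold Rdiv. replace (2 * n * (A + / A)) with (n * (A ^ 2 + 1) * (2 / A)) by (field; lra).
  apply Rmult_le_compat; [nra | left; apply Rinv_0_lt_compat; lra | assumption | assumption].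
Qed.

Lemma Cmod_add_ge_half (g1 g2 : C) : Cmod g1 <= 2 * Re g1 -> Cmod g2 <= 2 * Re g2 ->
  (Cmod g1 + Cmod g2) / 2 <= Cmod (g1 + g2)%C.
Proof.
  intros Hr1 Hr2. pose proof (re_le_Cmod (g1 + g2)%C) as H. apply Rabs_le_between in H.
  replace (Re (g1 + g2)%C) with (Re g1 + Re g2) in H by (destruct g1, g2; reflexivity). lra.
Qed.

Lemma divided_difference_identity n (lam g1 g2 w1 w2 Sm : C) : (g1 + g2)%C <> 0%C ->
  (lam * w1 ^ n = g1 * g1 - 1)%C -> (lam * w2 ^ n = g2 * g2 - 1)%C ->
  (w1 ^ n - w2 ^ n = (w1 - w2) * Sm)%C ->
  (w1 * g1 - w2 * g2 = (w1 - w2) * (g1 + w2 * lam * Sm / (g1 + g2)))%C.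
Proof.
  intros Hgs Hw1 Hw2 HS.
  assert (Hd : (g1 - g2 = lam * (w1 - w2) * Sm / (g1 + g2))%C).
  { transitivity ((g1 * g1 - 1 - (g2 * g2 - 1)) / (g1 + g2))%C; [field; assumption|].
    rewrite <- Hw1, <- Hw2.
    replace (lam * w1 ^ n - lam * w2 ^ n)%C with (lam * (w1 ^ n - w2 ^ n))%C by ring.
    rewrite HS. field. assumption. }
  transitivity ((w1 - w2) * g1 + w2 * (g1 - g2))%C; [ring|]. rewrite Hd. field. assumption.
Qed.

(* Here [g] plays [1 / f] and [w] plays [u f]. The correction term [w2 lam S / (g1 + g2)] is
   small: [|g1 + g2| >= max |g| / 2] since both [g] lie in [|arg g| <= PI/3], while
   [|lam| max |w|^n = |g^2 - 1|] for the [g] belonging to the larger [w]. *)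
Lemma divided_difference_bound n (lam g1 g2 w1 w2 : C) (m : R) : 0 < m ->
  g1 <> 0%C -> g2 <> 0%C -> Cmod g1 <= 2 * Re g1 -> Cmod g2 <= 2 * Re g2 ->
  / Cmod g1 <= / m -> / Cmod g2 <= / m ->
  (lam * w1 ^ n = g1 * g1 - 1)%C -> (lam * w2 ^ n = g2 * g2 - 1)%C ->
  Cmod (w1 * g1 - w2 * g2)%C <=
    Cmod (w1 - w2)%C * (2 * INR n / m + (1 + 2 * INR n) * Rmax (Cmod g1) (Cmod g2)).
Proof.
  intros Hm Hg1 Hg2 Hr1 Hr2 Hm1 Hm2 Hw1 Hw2.
  set (M := Rmax (Cmod w1) (Cmod w2)).
  destruct (Cpow_sub_factor w1 w2 M n (Rmax_l _ _) (Rmax_r _ _)) as [Sm [HS HSb]].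
  assert (Hc1 : 0 < Cmod g1) by now apply Cmod_gt_0.
  assert (Hc2 : 0 < Cmod g2) by now apply Cmod_gt_0.
  pose proof (Cmod_add_ge_half g1 g2 Hr1 Hr2) as Hsum.
  assert (Hgs : (g1 + g2)%C <> 0%C) by (intro E; rewrite E, Cmod_0 in Hsum; lra).
  rewrite (divided_difference_identity n lam g1 g2 w1 w2 Sm), Cmod_mult by assumption.
  apply Rmult_le_compat_l; [apply Cmod_ge_0|].
  eapply Rle_trans; [apply Cmod_triangle|].
  unfold Complex.Cdiv. rewrite !Cmod_mult, Cmod_inv by assumption.
  set (Gm := Rmax (Cmod g1) (Cmod g2)).
  assert (HG1 : Cmod g1 <= Gm) by apply Rmax_l.
  assert (HG2 : Cmod g2 <= Gm) by apply Rmax_r.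
  assert (HX : Cmod w2 * Cmod Sm <= INR n * M ^ n)
    by (assert (Cmod w2 <= M) by apply Rmax_r; pose proof (Cmod_ge_0 Sm); nra).
  assert (Hn : 0 <= INR n) by apply pos_INR.
  assert (HX0 : 0 <= Cmod w2 * Cmod Sm) by (apply Rmult_le_pos; apply Cmod_ge_0).
  assert (Hterm : Cmod w2 * Cmod lam * Cmod Sm * / Cmod (g1 + g2)%C <= 2 * INR n * (Gm + / m)).
  { replace (Cmod w2 * Cmod lam * Cmod Sm * / Cmod (g1 + g2)%C)
      with (Cmod w2 * Cmod Sm * Cmod lam / Cmod (g1 + g2)%C) by (unfold Rdiv; ring).
    destruct (Rle_lt_dec (Cmod w2) (Cmod w1)) as [Hw|Hw].
    - replace M with (Cmod w1) in HX by (symmetry; now apply Rmax_left).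
      eapply Rle_trans;
        [apply (ratio_bound _ (Cmod lam) _ (Cmod g1) (INR n) (Cmod w1 ^ n)); try lra|].
      + apply Cmod_ge_0.
      + now apply (Cmod_Cpow_le_Cmod_sq_add_1 lam w1 g1).
      + apply Rmult_le_compat_l; lra.
    - replace M with (Cmod w2) in HX by (symmetry; apply Rmax_right; lra).
      eapply Rle_trans;
        [apply (ratio_bound _ (Cmod lam) _ (Cmod g2) (INR n) (Cmod w2 ^ n)); try lra|].
      + apply Cmod_ge_0.
      + now apply (Cmod_Cpow_le_Cmod_sq_add_1 lam w2 g2).
      + apply Rmult_le_compat_l; lra. }
  lra.
Qed.

Lemma Csqrt_right_half_plane (t : C) : 0 <= Re t ->
  (Csqrt t * Csqrt t = t)%C /\ Cmod (Csqrt t) ^ 2 = Cmod t /\ Cmod (Csqrt t) <= 2 * Re (Csqrt t).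
Proof.
  intros Hx. destruct t as [x y]. unfold Re in Hx; simpl in Hx.
  set (N := Cnorm (x, y)).
  assert (HN2 : N ^ 2 = x ^ 2 + y ^ 2) by apply (Cmod2_alt (x, y)).
  assert (HN0 : 0 <= N) by apply Cmod_ge_0.
  assert (Hxn : Rabs x <= N)
    by (apply (pow_le_reg _ _ 2); [apply Rabs_pos | lra | lia | rewrite pow2_abs; nra]).
  apply Rabs_le_between in Hxn.
  set (A := sqrt ((N + x) / 2)). set (B := sqrt ((N - x) / 2)).
  assert (HA : A * A = (N + x) / 2) by (apply sqrt_sqrt; lra).
  assert (HB : B * B = (N - x) / 2) by (apply sqrt_sqrt; lra).
  assert (HA0 : 0 <= A) by apply sqrt_pos.
  assert (HAB : A * B = Rabs y / 2).
  { unfold A, B. rewrite <- sqrt_mult by lra.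
    replace ((N + x) / 2 * ((N - x) / 2)) with (Rsqr (y / 2)) by (unfold Rsqr; nra).
    rewrite sqrt_Rsqr_abs, Rabs_div, (Rabs_pos_eq 2) by lra. reflexivity. }
  unfold Csqrt. fold N. simpl fst. simpl snd. fold A B.
  set (sg := if Rlt_dec y 0 then -1 else 1).
  assert (Hsg : sg * sg = 1) by (unfold sg; destruct Rlt_dec; ring).
  assert (Hsgy : sg * Rabs y = y)
    by (unfold sg; destruct Rlt_dec; [rewrite Rabs_left by lra | rewrite Rabs_pos_eq by lra]; ring).
  assert (HAB2 : A ^ 2 + (sg * B) ^ 2 = N)
    by (replace ((sg * B) ^ 2) with ((sg * sg) * (B * B)) by ring; rewrite Hsg; nra).
  split; [|split].
  - unfold Cmult; simpl. f_equal.
    + replace (A * A - sg * B * (sg * B)) with (A * A - (sg * sg) * (B * B)) by ring.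
      rewrite Hsg, HA, HB. field.
    + replace (A * (sg * B) + sg * B * A) with (sg * (2 * (A * B))) by ring.
      rewrite HAB. rewrite <- Hsgy at 2. field.
  - rewrite Cmod2_alt. exact HAB2.
  - unfold Re; simpl. apply (pow_le_reg _ _ 2); [apply Cmod_ge_0 | lra | lia|].
    rewrite Cmod2_alt. unfold Re, Im; cbn [fst snd]. nra.
Qed.

Lemma sq_mul_le_1_le_Rinv (F m : R) : 0 < m <= 1 -> 0 <= F -> F ^ 2 * m <= 1 -> F <= / m.
Proof.
  intros Hm HF H. destruct (Rle_lt_dec F (/ m)) as [|Hlt]; [assumption|].
  assert (1 <= / m) by (rewrite <- Rinv_1; apply Rinv_le_contravar; lra).
  apply (Rmult_lt_compat_r m) in Hlt; [|lra]. rewrite Rinv_l in Hlt by lra. nra.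
Qed.

Lemma rpow_pow (x y : R) k : (1 <= k)%nat -> 0 <= x -> rpow x y ^ k = rpow x (y * INR k).
Proof.
  intros Hk Hx. unfold rpow. destruct Req_EM_T as [_|Hx0]; [now apply pow_i|].
  rewrite <- Rpower_pow, Rpower_mult; [reflexivity | apply exp_pos].
Qed.

Lemma rpow_INR (x : R) k : (1 <= k)%nat -> 0 <= x -> rpow x (INR k) = x ^ k.
Proof.
  intros Hk Hx. unfold rpow. destruct Req_EM_T as [->|Hx0]; [symmetry; now apply pow_i|].
  apply Rpower_pow. lra.
Qed.

Definition Lambda_term (p : nat) (lam : C) (u : R) : R :=
  rpow (Cnorm lam) (/ (2 * INR p)) * rpow (Rabs u) (1 - / INR p).

Lemma Lambda_term_nonneg p lam u : 0 <= Lambda_term p lam u.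
Proof.
  assert (Hr : forall x y, 0 <= rpow x y)
    by (intros x y; unfold rpow; destruct Req_EM_T; [lra | left; apply exp_pos]).
  apply Rmult_le_pos; apply Hr.
Qed.

Lemma Lambda_term_pow p lam u : (2 <= p)%nat ->
  Lambda_term p lam u ^ (2 * p) = Cnorm lam * Rabs u ^ (2 * p - 2).
Proof.
  intros Hp. assert (HINR : 0 < INR p) by (apply lt_0_INR; lia).
  unfold Lambda_term.
  rewrite Rpow_mult_distr, !rpow_pow by (lia || apply Cmod_ge_0 || apply Rabs_pos).
  replace (/ (2 * INR p) * INR (2 * p)) with (INR 1) by (rewrite mult_INR; simpl; field; lra).
  replace ((1 - / INR p) * INR (2 * p)) with (INR (2 * p - 2))
    by (rewrite minus_INR, mult_INR by lia; simpl; field; lra).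
  rewrite !rpow_INR, pow_1 by (lia || apply Cmod_ge_0 || apply Rabs_pos). reflexivity.
Qed.

Lemma Lambda_l p lam mi mj : Rmax 1 (Lambda_term p lam mi) <= Lambda p lam mi mj.
Proof. apply Rmax_lub; [apply Rmax_l | eapply Rle_trans; [apply Rmax_l | apply Rmax_r]]. Qed.

Lemma Lambda_r p lam mi mj : Rmax 1 (Lambda_term p lam mj) <= Lambda p lam mi mj.
Proof. apply Rmax_lub; [apply Rmax_l | eapply Rle_trans; [apply Rmax_r | apply Rmax_r]]. Qed.

Lemma divided_difference_factor_le (n m X L : R) : 0 <= n -> 0 < m -> 1 <= L -> 0 <= X <= 4 * L ->
  2 * n / m + (1 + 2 * n) * X <= (2 * n / m + 4 * (1 + 2 * n)) * L.
Proof.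
  intros Hn Hm HL HX. assert (0 <= n / m) by (apply Rdiv_le_0_compat; lra).
  unfold Rdiv in *. nra.
Qed.

Definition divided_difference_const (p : nat) (eps : R) : R :=
  2 * INR (2 * p - 2) / sin (sector_angle p eps) + 4 * (1 + 2 * INR (2 * p - 2)).

Lemma divided_difference_const_pos p eps : (2 <= p)%nat -> eps > 0 ->
  0 < divided_difference_const p eps.
Proof.
  intros Hp He. destruct (sector_angle_bounds p eps Hp He) as [Ha _]. pose proof PI_RGT_0.
  assert (0 < sin (sector_angle p eps)) by (apply sin_gt_0; lra).
  pose proof (pos_INR (2 * p - 2)).
  pose proof (Rdiv_le_0_compat (INR (2 * p - 2)) (sin (sector_angle p eps))).
  unfold divided_difference_const. unfold Rdiv in *. nra.
Qed.

Section OnTheRay.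
Variables (p : nat) (T : Cx -> Cx) (lam : C) (eps : R).
Hypotheses (Hp : (2 <= p)%nat) (He : eps > 0) (HT : is_fuss_catalan p T)
  (Hlam : lam <> (0, 0)) (Harg : arg_bound lam eps).

Lemma f_lam_spec u :
  let f : C := f_lam p T lam u in let t : C := T (fc_arg p lam u) in
  (f * f = t)%C /\ t <> 0%C /\ (- lam * RtoC (u ^ (2 * p - 2)) * t ^ p - t + 1 = 0)%C /\
  Cmod f ^ 2 = Cmod t /\ Cmod f <= 2 * Re f /\ Cmod t * sin (sector_angle p eps) <= 1.
Proof.
  intros f t.
  destruct (fuss_catalan_on_ray p T lam eps u Hp He HT Hlam Harg) as [Hsl [Hne [Hre Hb]]].
  destruct (Csqrt_right_half_plane t Hre) as [Hff [Hmf Hfre]].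
  repeat split; try assumption. exact (fuss_catalan_root p T HT _ Hsl).
Qed.

Lemma f_lam_neq0 u : (f_lam p T lam u : C) <> 0%C.
Proof.
  destruct (f_lam_spec u) as [Hff [Hne _]]. intros E. apply Hne. rewrite <- Hff, E. ring.
Qed.

(* From the root equation, [lam u^(2p-2) t^(p-1) = 1/t - 1] with [t = f^2]. *)
Lemma f_lam_equation u :
  (lam * (RtoC u * f_lam p T lam u) ^ (2 * p - 2) = / f_lam p T lam u * / f_lam p T lam u - 1)%C.
Proof.
  destruct (f_lam_spec u) as [Hff [Hne [Heq _]]].
  set (f := (f_lam p T lam u : C)) in *. set (t := (T (fc_arg p lam u) : C)) in *.
  assert (Hf : f <> 0%C) by apply f_lam_neq0.
  rewrite Cpow_mult_l, <- RtoC_pow.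
  replace (2 * p - 2)%nat with (2 * (p - 1))%nat by lia.
  rewrite Cpow_mult_r. replace (f ^ 2)%C with (f * f)%C by ring. rewrite Hff.
  replace (2 * (p - 1))%nat with (2 * p - 2)%nat by lia.
  replace p with (S (p - 1)) in Heq at 2 by lia. rewrite Cpow_S in Heq.
  transitivity ((- (- lam * RtoC (u ^ (2 * p - 2)) * (t * t ^ (p - 1)) - t + 1) + 1 - t) / t)%C.
  - field. assumption.
  - rewrite Heq, <- Hff. field. assumption.
Qed.

Lemma Cinv_f_lam_spec u :
  let g : C := (/ f_lam p T lam u)%C in
  g <> 0%C /\ Cmod g = / Cmod (f_lam p T lam u) /\ Cmod g <= 2 * Re g /\
  / Cmod g <= / sin (sector_angle p eps).
Proof.
  intro g. destruct (f_lam_spec u) as [_ [_ [_ [Hmf [Hfre Hb]]]]].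
  destruct (sector_angle_bounds p eps Hp He) as [Ha _]. pose proof PI_RGT_0.
  pose proof (f_lam_neq0 u) as Hf. assert (Hc : 0 < Cmod (f_lam p T lam u)) by now apply Cmod_gt_0.
  assert (Hcg : Cmod g = / Cmod (f_lam p T lam u)) by now apply Cmod_inv.
  split; [|split; [|split]].
  - intro E. apply (f_equal Cmod) in E. rewrite Hcg, Cmod_0 in E.
    pose proof (Rinv_0_lt_compat _ Hc). lra.
  - exact Hcg.
  - now apply Cmod_le_2_Re_Cinv.
  - rewrite Hcg, Rinv_inv. apply sq_mul_le_1_le_Rinv; [|lra | now rewrite Hmf].
    split; [apply sin_gt_0; lra | apply SIN_bound].
Qed.

Lemma h_lam_divided_difference u1 u2 :
  Rabs (u1 - u2) <= Cmod (h_lam p T lam u1 - h_lam p T lam u2)%C *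
    (2 * INR (2 * p - 2) / sin (sector_angle p eps) + (1 + 2 * INR (2 * p - 2)) *
      Rmax (/ Cmod (f_lam p T lam u1)) (/ Cmod (f_lam p T lam u2))).
Proof.
  destruct (sector_angle_bounds p eps Hp He) as [Ha _]. pose proof PI_RGT_0.
  destruct (Cinv_f_lam_spec u1) as [Hn1 [Hc1 [Hr1 Hm1]]].
  destruct (Cinv_f_lam_spec u2) as [Hn2 [Hc2 [Hr2 Hm2]]].
  rewrite <- Hc1, <- Hc2.
  replace (Rabs (u1 - u2)) with (Cmod (RtoC u1 * f_lam p T lam u1 * / f_lam p T lam u1 -
      RtoC u2 * f_lam p T lam u2 * / f_lam p T lam u2)%C).
  - apply (divided_difference_bound (2 * p - 2) lam); try apply f_lam_equation; try assumption.
    apply sin_gt_0; lra.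
  - rewrite <- Cmod_R, RtoC_minus. f_equal. field. split; apply f_lam_neq0.
Qed.

(* Either [|t| >= 1/2], or [|lam| |u|^(2p-2) |t|^p = |t - 1| >= 1/2]. *)
Lemma inv_Cmod_f_lam_le u : / Cmod (f_lam p T lam u) <= 2 * Rmax 1 (Lambda_term p lam u).
Proof.
  destruct (f_lam_spec u) as [_ [Hne [Heq [Hmf _]]]].
  set (t := (T (fc_arg p lam u) : C)) in *.
  assert (Hct : 0 < Cmod t) by now apply Cmod_gt_0.
  assert (Hcf : 0 < Cmod (f_lam p T lam u))
    by (apply Cmod_gt_0, f_lam_neq0).
  set (A := / Cmod (f_lam p T lam u)).
  assert (HA0 : 0 < A) by now apply Rinv_0_lt_compat.
  assert (HA2 : A ^ 2 = / Cmod t) by (unfold A; rewrite <- Hmf; field; lra).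
  pose proof (Lambda_term_nonneg p lam u) as HL0.
  pose proof (Rmax_l 1 (Lambda_term p lam u)). pose proof (Rmax_r 1 (Lambda_term p lam u)).
  destruct (Rle_lt_dec (/ 2) (Cmod t)) as [Hbig|Hsmall].
  - enough (A <= 2) by lra. apply (pow_le_reg _ _ 2); [lra | lra | lia|].
    rewrite HA2. replace (2 ^ 2) with (/ / 4) by (rewrite Rinv_inv; ring).
    apply Rinv_le_contravar; lra.
  - assert (Hz : Cmod lam * Rabs u ^ (2 * p - 2) * Cmod t ^ p = Cmod (t - 1)%C).
    { replace (t - 1)%C with (- lam * RtoC (u ^ (2 * p - 2)) * t ^ p)%C
        by (transitivity (- lam * RtoC (u ^ (2 * p - 2)) * t ^ p - (- lam * RtoC (u ^ (2 * p - 2))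
          * t ^ p - t + 1))%C; [rewrite Heq|]; ring).
      now rewrite !Cmod_mult, Cmod_opp, Cmod_R, Cmod_pow, RPow_abs. }
    assert (Ht1 : 1 - Cmod t <= Cmod (t - 1)%C).
    { pose proof (Cmod_triangle (t - 1)%C (- t)%C) as Htr.
      replace (t - 1 + - t)%C with (- (1))%C in Htr by ring.
      rewrite !Cmod_opp, Cmod_1 in Htr. lra. }
    change (Cmod lam) with (Cnorm lam) in Hz. rewrite <- (Lambda_term_pow p lam u Hp) in Hz.
    set (L := Lambda_term p lam u) in *.
    assert (Hctp : 0 < Cmod t ^ p) by (apply pow_lt; lra).
    enough (A <= 2 * L) by lra.
    apply (pow_le_reg _ _ (2 * p)); [lra | lra | lia|].
    rewrite pow_mult, HA2, Rpow_mult_distr, pow_inv.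
    assert (H2 : 2 <= 2 ^ (2 * p)) by (rewrite <- (pow_1 2) at 1; apply Rle_pow; lra || lia).
    assert (HL2 : 0 <= L ^ (2 * p)) by (apply pow_le; assumption).
    apply (Rmult_le_reg_r (Cmod t ^ p)); [assumption|]. rewrite Rinv_l by lra. nra.
Qed.

Lemma T_fc_arg_continuous x e : 0 < e ->
  exists delta, 0 < delta /\ forall u, Rabs (u - x) < delta ->
  Cmod (T (fc_arg p lam u) - T (fc_arg p lam x))%C < e.
Proof.
  intros He0. pose proof (Cmod_ge_0 lam).
  destruct (fuss_catalan_on_ray p T lam eps x Hp He HT Hlam Harg) as [Hsl _].
  destruct (fuss_catalan_continuous p T HT _ Hsl e He0) as [d1 [Hd1 Hw]].
  destruct (derivable_continuous_pt _ _ (derivable_pt_pow (2 * p - 2) x) (d1 / (Cmod lam + 1)))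
    as [dl [Hdl Hdlp]]; [apply Rdiv_lt_0_compat; lra|].
  exists dl. split; [assumption|]. intros u Hu.
  destruct (Req_dec u x) as [->|Hux].
  { replace (_ - _)%C with (RtoC 0) by ring. rewrite Cmod_0. lra. }
  apply Hw; [apply (fuss_catalan_on_ray p T lam eps u Hp He HT Hlam Harg)|].
  assert (Hpow : Rabs (u ^ (2 * p - 2) - x ^ (2 * p - 2)) < d1 / (Cmod lam + 1))
    by (apply (Hdlp u); split; [split; [exact I | congruence] | exact Hu]).
  unfold fc_arg.
  replace (- lam * RtoC (u ^ (2 * p - 2)) - - lam * RtoC (x ^ (2 * p - 2)))%C
    with (- lam * RtoC (u ^ (2 * p - 2) - x ^ (2 * p - 2)))%C by (rewrite RtoC_minus; ring).
  rewrite Cmod_mult, Cmod_opp, Cmod_R.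
  apply (Rmult_lt_compat_r (Cmod lam + 1)) in Hpow; [|lra].
  replace (d1 / (Cmod lam + 1) * (Cmod lam + 1)) with d1 in Hpow by (field; lra).
  pose proof (Rabs_pos (u ^ (2 * p - 2) - x ^ (2 * p - 2))). nra.
Qed.

Lemma inv_Cmod_f_lam_near x : exists delta, 0 < delta /\ forall u, Rabs (u - x) < delta ->
  / Cmod (f_lam p T lam u) <= 2 * / Cmod (f_lam p T lam x).
Proof.
  destruct (f_lam_spec x) as [_ [Hne [_ [Hmx _]]]].
  assert (Ht0 : 0 < Cmod (T (fc_arg p lam x))) by now apply Cmod_gt_0.
  destruct (T_fc_arg_continuous x (3 / 4 * Cmod (T (fc_arg p lam x)))) as [delta [Hdelta Hclose]];
    [lra|].
  exists delta. split; [assumption|]. intros u Hu. specialize (Hclose u Hu).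
  destruct (f_lam_spec u) as [_ [_ [_ [Hmu _]]]].
  set (tu := (T (fc_arg p lam u) : C)) in *. set (tx := (T (fc_arg p lam x) : C)) in *.
  pose proof (Cmod_triangle tu (tx - tu)%C) as Htri.
  replace (Cmod (tx - tu)%C) with (Cmod (tu - tx)%C) in Htri
    by (rewrite <- Cmod_opp; f_equal; ring).
  replace (tu + (tx - tu))%C with tx in Htri by ring.
  assert (Hcu : 0 < Cmod (f_lam p T lam u)) by apply Cmod_gt_0, f_lam_neq0.
  assert (Hcx : 0 < Cmod (f_lam p T lam x)) by apply Cmod_gt_0, f_lam_neq0.
  assert (Cmod (f_lam p T lam x) / 2 <= Cmod (f_lam p T lam u))
    by (apply (pow_le_reg _ _ 2); [lra | lra | lia | rewrite Hmu; simpl in Hmx |- *; nra]).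
  replace (2 * / Cmod (f_lam p T lam x)) with (/ (Cmod (f_lam p T lam x) / 2)) by (field; lra).
  apply Rinv_le_contravar; lra.
Qed.

Lemma h_lam_divided_difference_Lambda u1 u2 L : 1 <= L ->
  / Cmod (f_lam p T lam u1) <= 4 * L -> / Cmod (f_lam p T lam u2) <= 4 * L ->
  Rabs (u1 - u2) <=
    Cmod (h_lam p T lam u1 - h_lam p T lam u2)%C * (divided_difference_const p eps * L).
Proof.
  intros HL H1 H2. destruct (sector_angle_bounds p eps Hp He) as [Ha _]. pose proof PI_RGT_0.
  eapply Rle_trans; [apply h_lam_divided_difference|].
  apply Rmult_le_compat_l; [apply Cmod_ge_0|].
  apply divided_difference_factor_le; [apply pos_INR | apply sin_gt_0; lra | assumption|].
  split; [|now apply Rmax_lub].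
  apply Rmax_case; left; apply Rinv_0_lt_compat, Cmod_gt_0, f_lam_neq0.
Qed.

Lemma inv_Cmod_f_lam_le_Lambda mi mj :
  / Cmod (f_lam p T lam mi) <= 2 * Lambda p lam mi mj /\
  / Cmod (f_lam p T lam mj) <= 2 * Lambda p lam mi mj.
Proof.
  pose proof (inv_Cmod_f_lam_le mi); pose proof (inv_Cmod_f_lam_le mj).
  pose proof (Lambda_l p lam mi mj); pose proof (Lambda_r p lam mi mj). lra.
Qed.

End OnTheRay.

Lemma Cmod_RtoC_div_le (a K : R) (w : C) : a <> 0 -> Rabs a <= Cmod w * K ->
  Cmod (RtoC a / w)%C <= K.
Proof.
  intros Ha H. assert (Hw : w <> 0%C).
  { intros ->. rewrite Cmod_0, Rmult_0_l in H. pose proof (Rabs_pos_lt a Ha). lra. }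
  assert (Hcw : 0 < Cmod w) by now apply Cmod_gt_0.
  rewrite Cmod_div, Cmod_R by assumption.
  apply (Rmult_le_reg_r (Cmod w)); [assumption|]. unfold Rdiv. rewrite Rmult_assoc, Rinv_l; lra.
Qed.

(* The factor [2] comes from bounding [|d|] by [|Re d| + |Im d|]. *)
Lemma deriv_lower_bound (H : R -> C) (x : R) (d : C) (Q delta : R) : 0 < Q -> 0 < delta ->
  has_cderiv H x d -> (forall e, 0 < e < delta -> e <= Cmod (H (x + e)%R - H x)%C * Q) ->
  1 <= 2 * Cmod d * Q.
Proof.
  intros HQ Hdl [H1 H2] Hb.
  destruct (Rle_lt_dec 1 (2 * Cmod d * Q)) as [|Hlt]; [assumption|]. exfalso.
  set (eps1 := (1 - 2 * Cmod d * Q) / (4 * Q)).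
  assert (He1 : 0 < eps1) by (apply Rdiv_lt_0_compat; lra).
  destruct (H1 eps1 He1) as [d1 Hd1]. destruct (H2 eps1 He1) as [d2 Hd2].
  set (e := Rmin delta (Rmin d1 d2) / 2).
  assert (Hmin : 0 < Rmin delta (Rmin d1 d2)) by (repeat apply Rmin_glb_lt; auto; apply cond_pos).
  assert (He : 0 < e) by (unfold e; lra).
  pose proof (Rmin_l delta (Rmin d1 d2)); pose proof (Rmin_r delta (Rmin d1 d2)).
  pose proof (Rmin_l d1 d2); pose proof (Rmin_r d1 d2).
  specialize (Hd1 e ltac:(lra) ltac:(rewrite Rabs_pos_eq; unfold e; lra)).
  specialize (Hd2 e ltac:(lra) ltac:(rewrite Rabs_pos_eq; unfold e; lra)).
  specialize (Hb e ltac:(unfold e; lra)).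
  pose proof (re_le_Cmod d). pose proof (Rabs_Im_le_Cmod d).
  set (a1 := (fst (H (x + e)) - fst (H x)) / e) in *.
  set (a2 := (snd (H (x + e)) - snd (H x)) / e) in *.
  assert (Hc : Cmod (H (x + e)%R - H x)%C <= e * (Rabs a1 + Rabs a2)).
  { eapply Rle_trans; [apply Cmod_le_Rabs_Re_Im|].
    replace (Re (H (x + e)%R - H x)%C) with (e * a1)
      by (unfold a1, Re; destruct (H (x + e)), (H x); simpl; field; lra).
    replace (Im (H (x + e)%R - H x)%C) with (e * a2)
      by (unfold a2, Im; destruct (H (x + e)), (H x); simpl; field; lra).
    rewrite !Rabs_mult, Rabs_pos_eq by lra. lra. }
  pose proof (Rabs_triang_inv a1 (fst d)); pose proof (Rabs_triang_inv a2 (snd d)).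
  assert (e <= e * (2 * Cmod d + 2 * eps1) * Q).
  { eapply Rle_trans; [exact Hb|]. apply Rmult_le_compat_r; [lra|].
    eapply Rle_trans; [exact Hc|]. apply Rmult_le_compat_l; [lra|]. unfold Re, Im in *. lra. }
  assert (1 <= (2 * Cmod d + 2 * eps1) * Q) by (apply (Rmult_le_reg_l e); lra).
  assert ((2 * Cmod d + 2 * eps1) * Q = 2 * Cmod d * Q + (1 - 2 * Cmod d * Q) / 2)
    by (unfold eps1; field; lra).
  lra.
Qed.

Lemma Cmod_Cinv_deriv_le (H : R -> C) (x : R) (d : C) (Q delta : R) : 0 < Q -> 0 < delta ->
  has_cderiv H x d -> (forall e, 0 < e < delta -> e <= Cmod (H (x + e)%R - H x)%C * Q) ->
  Cmod (/ d)%C <= 2 * Q.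
Proof.
  intros HQ Hdl Hd Hb. pose proof (deriv_lower_bound H x d Q delta HQ Hdl Hd Hb).
  assert (Hdp : 0 < Cmod d) by (pose proof (Cmod_ge_0 d); nra).
  rewrite Cmod_inv by (intros E; rewrite E, Cmod_0 in Hdp; lra).
  apply (Rmult_le_reg_l (Cmod d)); [assumption|]. rewrite Rinv_r; lra.
Qed.

Theorem lemma3p1 :
  forall (p : nat), (2 <= p)%nat ->
  forall eps : R, eps > 0 ->
  exists C : R,
    forall (T : Cx -> Cx), is_fuss_catalan p T ->
    forall lam : Cx, lam <> (0, 0) -> arg_bound lam eps ->
    forall mi mj : R,
      (mi <> mj ->
         Cnorm (Cdiv (CofR (mi - mj)) (Csub (h_lam p T lam mi) (h_lam p T lam mj)))
           <= C * Lambda p lam mi mj) /\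
      (mi = mj -> forall d : Cx, has_cderiv (h_lam p T lam) mi d ->
         Cnorm (Cinv d) <= C * Lambda p lam mi mj).
Proof.
  intros p Hp eps He. exists (2 * divided_difference_const p eps).
  intros T HT lam Hlam Harg mi mj.
  pose proof (divided_difference_const_pos p eps Hp He) as HK.
  assert (HL : 1 <= Lambda p lam mi mj) by apply Rmax_l.
  destruct (inv_Cmod_f_lam_le_Lambda p T lam eps Hp He HT Hlam Harg mi mj) as [Hi Hj].
  split.
  - intros Hij. apply (Rle_trans _ (divided_difference_const p eps * Lambda p lam mi mj)); [|nra].
    apply Cmod_RtoC_div_le; [lra|].
    apply (h_lam_divided_difference_Lambda p T lam eps Hp He HT Hlam Harg); lra.
  - intros <- d Hd.
    destruct (inv_Cmod_f_lam_near p T lam eps Hp He HT Hlam Harg mi) as [delta [Hdelta Hnear]].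
    rewrite Rmult_assoc.
    apply (Cmod_Cinv_deriv_le (h_lam p T lam) mi d _ delta); [nra | assumption.. |].
    intros e He0. replace e with (Rabs (mi + e - mi)) at 1 by (rewrite Rabs_pos_eq; lra).
    apply (h_lam_divided_difference_Lambda p T lam eps Hp He HT Hlam Harg); [lra | | lra].
    enough (/ Cmod (f_lam p T lam (mi + e)) <= 2 * / Cmod (f_lam p T lam mi)) by lra.
    apply Hnear. rewrite Rabs_pos_eq; lra.
Qed.
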